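(* Let $G$ be a finite graph. If there are integers $a\ge 0$ and $b\ge 2$ such that $\phi^a_b(G)\ge 2\chi(G)$, then $\chi_c(G)=\chi(G)$.
   Context: $\chi_c(G)$ is the circular chromatic number: the minimum of $n/d$ such that $G$ has a homomorphism to the circular complete graph $K_{n/d}$ (vertices $0,\dots,n-1$, $i\sim j$ iff $d\le|i-j|\le n-d$). An independent set $F$ of $G$ is free if it is contained in at least two distinct maximal independent sets; an edge $uv$ supports $F$ if $F\cap(N(u)\cup N(v))=\emptyset$. For integers $a\ge0,b\ge1$, $\phi^a_b(G)$ is the minimum $t$ such that $V(G)$ is partitioned into independent sets $V_1,\dots,V_t$ with $V_1,\dots,V_{t-a}$ free, and there are edges $e_1,\dots,e_{t-a}$ (not necessarily distinct) with $e_i$ supporting $V_i$ and every vertex incident with at most $b$ of $e_1,\dots,e_{t-a}$; $\phi^a_b(G)=\infty$ if no such $t$ exists. *)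

(* Finite simple graphs are given as a symmetric,
   irreflexive relation e : rel V on a finType V. *)
From Stdlib Require Import ClassicalEpsilon.
From mathcomp Require Import all_boot all_order all_algebra.
Set Implicit Arguments. Unset Strict Implicit. Unset Printing Implicit Defensive.
Import Order.TTheory GRing.Theory Num.Theory.

Section Graphs.
Variables (V : finType) (e : rel V).

Definition colorable (k : nat) : bool :=
  [exists f : {ffun V -> 'I_k}, [forall x, forall y, e x y ==> (f x != f y)]].

(* chi = least k admitting a proper k-colouring (always exists for loopless
   graphs; the fallback 0 is never used there). *)
Definition chi : nat :=
  match excluded_middle_informative (exists k, colorable k) with
  | left H => ex_minn H
  | right _ => 0%N
  end.

Definition cdist (i j : nat) : nat := maxn i j - minn i j.

(* adjacency in the circular complete graph K_{n/d} on {0,..,n-1} *)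
Definition circ_adj (n d : nat) (i j : nat) : bool :=
  (d <= cdist i j) && (cdist i j <= n - d).

Definition circ_hom (n d : nat) : bool :=
  [exists f : {ffun V -> 'I_n},
     [forall x, forall y, e x y ==> circ_adj n d (f x) (f y)]].

Definition is_circ_chrom (r : rat) : Prop :=
  (exists n d : nat, [/\ (0 < d <= n)%N, circ_hom n d & r = (n%:R / d%:R)%R])
  /\ (forall n d : nat, (0 < d <= n)%N -> circ_hom n d -> (r <= n%:R / d%:R)%R).

Definition independent (F : {set V}) : bool :=
  [forall x in F, forall y in F, ~~ e x y].

Definition max_independent (M : {set V}) : bool := maxset independent M.

Definition free (F : {set V}) : bool :=
  independent F &&
  [exists M1 : {set V}, exists M2 : {set V},
     [&& max_independent M1, max_independent M2, M1 != M2,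
         F \subset M1 & F \subset M2]].

Definition nbhd (u : V) : {set V} := [set y | e u y].

Definition supports (uv : V * V) (F : {set V}) : bool :=
  e uv.1 uv.2 && (F :&: (nbhd uv.1 :|: nbhd uv.2) == set0).

(* phi^a_b-witness with t parts: parts P 0 .. P (t-1) (the paper's
   V_1..V_t), free parts are those of index < t - a (truncated subtraction:
   none if t <= a), each supported by the edge E i, and each vertex is
   incident with at most b of the edges E i, i < t - a (with multiplicity). *)
Definition phi_feasible (a b t : nat) : bool :=
  [exists P : {ffun 'I_t -> {set V}}, exists E : {ffun 'I_t -> V * V},
    [&& [forall i, independent (P i)],
        [forall x, exists i, x \in P i],
        [forall i, forall j, (i != j) ==> [disjoint P i & P j]],
        [forall i : 'I_t, ((i : nat) < t - a)%N ==> free (P i) && supports (E i) (P i)]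
      & [forall x, #|[set i : 'I_t | ((i : nat) < t - a)%N &&
                       ((x == (E i).1) || (x == (E i).2))]| <= b]]].

(* phi^a_b(G) : Some (minimum t) or None (= infinity) *)
Definition phi (a b : nat) : option nat :=
  match excluded_middle_informative (exists t, phi_feasible a b t) with
  | left H => Some (ex_minn H)
  | right _ => None
  end.

End Graphs.

(* comparison k <= o in the extended naturals (None = infinity) *)
Definition ext_geq (o : option nat) (k : nat) : bool :=
  if o is Some p then (k <= p)%N else true.

From Stdlib Require Import ClassicalEpsilon.
From Pilot Require Import Defs.
From mathcomp Require Import all_boot all_order all_algebra.
From mathcomp Require Import zify.
Set Implicit Arguments. Unset Strict Implicit. Unset Printing Implicit Defensive.
Import GRing.Theory Num.Theory.

(* Suppose chi_c(G) < chi(G) = k and take a homomorphism f : G -> K_{N/d} with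
   N/d < k and N minimal.  Then d >= 2, gcd(N, d) = 1 and f is onto; otherwise
   compressing to the Farey neighbour N'/d' < N/d (N d' - N' d = 1) after a
   rotation yields a smaller N.  Moreover f is tight: every colour p has an edge
   coloured (p, p + d), since otherwise p could be merged into p + 1.  Cutting
   the colours into ceil(N/(d-1)) blocks of d - 1 consecutive colours gives
   independent sets, each supported by a tight edge whose colours lie just
   before and just after it; supported sets are free, and every vertex is on at
   most two of these edges.  So phi^a_b(G) <= ceil(N/(d-1)) < 2k. *)

Lemma cdistC i j : cdist i j = cdist j i.
Proof. by rewrite /cdist maxnC minnC. Qed.

Lemma cdist_l i j : i <= j -> cdist i j = j - i.
Proof. rewrite /cdist; lia. Qed.

Lemma circ_adjC n d i j : circ_adj n d i j = circ_adj n d j i.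
Proof. by rewrite /circ_adj cdistC. Qed.

Lemma modn_lt_dbl x n : x < n + n -> x %% n = if x < n then x else x - n.
Proof.
move=> lt_x_2n; case: ifP => [/modn_small //|ge_x_n].
by rewrite -[in LHS](subnK (_ : n <= x)) ?modnDr ?modn_small; lia.
Qed.

Lemma circ_adj_rot n d i j s : i < n -> j < n -> circ_adj n d i j ->
  circ_adj n d ((i + s) %% n) ((j + s) %% n).
Proof.
move=> lt_i lt_j; rewrite -(modnDmr i) -(modnDmr j).
have : s %% n < n by rewrite ltn_pmod //; lia.
move: (s %% n) => t lt_t.
rewrite !modn_lt_dbl; try lia.
by rewrite /circ_adj /cdist; case: ifP; case: ifP => ? ? /andP[? ?]; apply/andP; lia.
Qed.

Lemma circ_adj_succ n d p q : p < n -> q < n -> 2 <= d -> circ_adj n d p q ->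
  q != (p + d) %% n -> circ_adj n d ((p + 1) %% n) q.
Proof.
move=> lt_p lt_q d_ge2; rewrite /circ_adj /cdist => /andP[? ?].
rewrite !modn_lt_dbl; try lia.
by case: ifP; case: ifP => ? ? /eqP ?; apply/andP; lia.
Qed.

Lemma cdist_divn i j g lo hi : 0 < g -> lo * g <= cdist i j <= hi * g ->
  lo <= cdist (i %/ g) (j %/ g) <= hi.
Proof.
move=> g_gt0; wlog le_ij : i j / i <= j.
  move=> H; case: (leqP i j) => [|/ltnW] ?; first exact: H.
  by rewrite cdistC [cdist (i %/ g) _]cdistC; apply: H.
rewrite !cdist_l ?leq_div2r // => /andP[? ?].
have : (lo * g + i) %/ g <= j %/ g by apply: leq_div2r; lia.
have : j %/ g <= (hi * g + i) %/ g by apply: leq_div2r; lia.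
rewrite !divnMDl //; lia.
Qed.

Lemma divn_mulr_lower d d' i j : 0 < d -> i + d <= j -> i * d' %/ d + d' <= j * d' %/ d.
Proof.
move=> d_gt0 le_ij; rewrite addnC -(divnMDl _ _ d_gt0); apply: leq_div2r.
have : (i + d) * d' <= j * d' by rewrite leq_mul2r le_ij orbT.
lia.
Qed.

(* [N'/d'] is the Farey neighbour just below [N/d]; [i |-> i d' / d] maps every
   vertex of K_{N/d} except [j0] into K_{N'/d'}, preserving adjacency. *)
Section Farey.
Variables (N d N' d' : nat).
Hypotheses (d_ge2 : 2 <= d) (d'_gt0 : 0 < d') (farey : N * d' = N' * d + 1).

Let d_gt0 : 0 < d. Proof. lia. Qed.

Local Notation j0 := (N - N %% d).

Lemma farey_modn_gt0 : 0 < N %% d.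
Proof.
rewrite lt0n; apply: contraTneq isT => N_mod_d.
have : d %| N * d' by rewrite dvdn_mulr // /dvdn N_mod_d.
by rewrite farey dvdn_addr ?dvdn_mull // dvdn1; lia.
Qed.

Lemma farey_divn_lt i : i < N -> i != j0 -> i * d' %/ d < N'.
Proof.
move=> lt_iN ne_ij0; rewrite ltn_divLR //.
case: (leqP 2 d') => [d'_ge2|d'_lt2].
  have : i.+1 * d' <= N * d' by rewrite leq_mul2r lt_iN orbT.
  lia.
have d'1 : d' = 1 by lia.
have : N %% d = 1 by rewrite -(muln1 N) -d'1 farey modnMDl modn_small.
by move: ne_ij0 farey; rewrite d'1 => /eqP; lia.
Qed.

Lemma farey_exceptional i j : j < N -> j + d = i + N -> i * d' %% d = d.-1 -> j = j0.
Proof.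
move=> lt_jN jd_iN r_max.
have dvd_iN : d %| i + N.
  have : i * N' * d + (i + N) = N * (i * d' %/ d + 1) * d.
    by move: (divn_eq (i * d') d); rewrite r_max; nia.
  by move/(congr1 (dvdn d)); rewrite dvdn_mull // dvdn_addr ?dvdn_mull.
have dvd_iNd : d %| i + N %% d.
  by move: dvd_iN; rewrite {1}(divn_eq N d) addnCA dvdn_addr // dvdn_mull.
have := farey_modn_gt0; have := ltn_pmod N d_gt0.
case/dvdnP: dvd_iNd => m; case: m => [|[|m]] /=; lia.
Qed.

Lemma farey_divn_upper i j : j < N -> j != j0 -> j + d <= i + N ->
  j * d' %/ d + d' <= i * d' %/ d + N'.
Proof.
move=> lt_jN ne_jj0 le_jd_iN.
have def_i := divn_eq (i * d') d; have lt_r := ltn_pmod (i * d') d_gt0.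
set A := i * d' %/ d in def_i *; set r := i * d' %% d in def_i lt_r.
suff : d' * d + j * d' < (A + N' + 1) * d.
  by rewrite -ltn_divLR // divnMDl // addnC; lia.
have [lt_jd_iN|jd_iN] : j + d < i + N \/ j + d = i + N by lia.
  have : (j + d).+1 * d' <= (i + N) * d' by rewrite leq_mul2r lt_jd_iN orbT.
  lia.
have : r != d.-1 by apply: contra ne_jj0 => /eqP /(farey_exceptional lt_jN jd_iN) ->.
have : (j + d) * d' = (i + N) * d' by rewrite jd_iN.
lia.
Qed.

Lemma farey_circ_adj i j : i < N -> j < N -> i != j0 -> j != j0 ->
  circ_adj N d i j -> circ_adj N' d' (i * d' %/ d) (j * d' %/ d).
Proof.
wlog le_ij : i j / i <= j.
  move=> H lt_i lt_j ne_i ne_j; case: (leqP i j) => [|/ltnW] ?; first exact: H.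
  by rewrite circ_adjC [circ_adj N' _ _ _]circ_adjC; apply: H.
move=> lt_iN lt_jN _ ne_jj0; rewrite /circ_adj cdist_l // => /andP[le_d_ji le_ji_Nd].
have le_id_j : i + d <= j by lia.
have le_jd_iN : j + d <= i + N by lia.
have := divn_mulr_lower d' d_gt0 le_id_j; have := farey_divn_upper lt_jN ne_jj0 le_jd_iN.
rewrite cdist_l ?leq_div2r ?leq_mul2r ?le_ij ?orbT // => up low.
by apply/andP; split; lia.
Qed.

End Farey.

Lemma farey_pred N d : 0 < N -> 1 < d -> coprime N d ->
  exists N' d', [/\ N * d' = N' * d + 1, 0 < d' & N' < N].
Proof.
move=> N_gt0 d_gt1 co_Nd.
have [a lt_ad] := Bezoutl N (ltnW d_gt1).
rewrite gcdnC (eqP co_Nd) => /dvdnP[s bezout].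
have s_le_N : s <= N by nia.
exists (N - s), (d - a); split; [|lia|nia].
by rewrite mulnBr mulnBl; nia.
Qed.

Section CircularColorings.
Variables (V : finType) (e : rel V).
Hypotheses (e_sym : symmetric e) (e_irr : irreflexive e).

Lemma colorable_card : colorable e #|V|.
Proof.
apply/existsP; exists [ffun x => enum_rank x]; apply/'forall_forallP => x y.
apply/implyP => exy; rewrite !ffunE; apply: contraTneq exy => /enum_rank_inj ->.
by rewrite e_irr.
Qed.

Lemma chiP : colorable e (chi e) /\ forall m, colorable e m -> chi e <= m.
Proof.
rewrite /chi; case: excluded_middle_informative => [ex_col|no_col].
  by case: ex_minnP.
by case: no_col; exists #|V|; apply: colorable_card.
Qed.

Definition circ_coloring n d (f : V -> nat) :=
  (forall x, f x < n) /\ (forall x y, e x y -> circ_adj n d (f x) (f y)).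

Lemma circ_homP n d : reflect (exists f, circ_coloring n d f) (circ_hom e n d).
Proof.
apply: (iffP existsP) => [[g /'forall_forallP g_hom]|[f [lt_f f_hom]]].
  by exists (fun x => val (g x)); split=> [x|x y /(implyP (g_hom x y))] //; apply: ltn_ord.
exists [ffun x => Ordinal (lt_f x)]; apply/'forall_forallP => x y.
by apply/implyP => /f_hom; rewrite !ffunE.
Qed.

Lemma colorable_circ_coloring n f : circ_coloring n 1 f -> colorable e n.
Proof.
case=> lt_f f_adj; apply/existsP; exists [ffun x => Ordinal (lt_f x)].
apply/'forall_forallP => x y; apply/implyP => /f_adj; rewrite !ffunE /circ_adj /cdist.
by rewrite -(inj_eq val_inj) /=; lia.
Qed.

Lemma circ_coloring_colorable n : colorable e n -> exists f, circ_coloring n 1 f.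
Proof.
case/existsP => g /'forall_forallP g_prop; exists (fun x => val (g x)).
split=> [x|x y /(implyP (g_prop x y))]; first exact: ltn_ord.
move: (g x) (g y) => [u lt_u] [v lt_v] /eqP ne_uv.
have : u <> v by move=> uv; apply: ne_uv; apply: val_inj.
rewrite /circ_adj /cdist /=; lia.
Qed.

Lemma circ_coloring_divn n d g f : 0 < g -> circ_coloring (n * g) (d * g) f ->
  circ_coloring n d (fun x => f x %/ g).
Proof.
move=> g_gt0 [lt_f f_adj]; split=> [x|x y /f_adj].
  by rewrite ltn_divLR.
by rewrite /circ_adj -mulnBl => /(cdist_divn g_gt0).
Qed.

Lemma circ_coloring_rot n d f s : circ_coloring n d f ->
  circ_coloring n d (fun x => (f x + s) %% n).
Proof.
case=> lt_f f_adj; split=> [x|x y exy].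
  by rewrite ltn_pmod //; have := lt_f x; lia.
exact: circ_adj_rot (lt_f x) (lt_f y) (f_adj x y exy).
Qed.

Lemma circ_coloring_farey N d N' d' f : 2 <= d -> 0 < d' -> N * d' = N' * d + 1 ->
  circ_coloring N d f -> (forall x, f x != N - N %% d) ->
  circ_coloring N' d' (fun x => f x * d' %/ d).
Proof.
move=> d_ge2 d'_gt0 farey [lt_f f_adj] f_avoid; split=> [x|x y exy].
  exact: farey_divn_lt (lt_f x) (f_avoid x).
exact: farey_circ_adj (lt_f x) (lt_f y) (f_avoid x) (f_avoid y) (f_adj x y exy).
Qed.

Lemma circ_coloring_move_missing n d f q j : q < n -> j < n ->
  circ_coloring n d f -> (forall x, f x != q) ->
  exists2 g, circ_coloring n d g & forall x, g x != j.
Proof.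
move=> lt_qn lt_jn f_col f_avoid; set s := j + n - q.
exists (fun x => (f x + s) %% n); first exact: circ_coloring_rot.
have -> : j = (q + s) %% n by rewrite addnC subnK ?modnDr ?modn_small; lia.
by move=> x; rewrite eqn_modDr !modn_small //; case: f_col.
Qed.

Definition recolor_succ N p (f : V -> nat) x := if f x == p then (p + 1) %% N else f x.

Lemma recolor_succ_neq N p f x : 1 < N -> p < N -> recolor_succ N p f x != p.
Proof.
move=> N_gt1 lt_pN; rewrite /recolor_succ; case: ifP => [_|/negbT //].
by rewrite modn_lt_dbl; [case: ifP => lt_p1; apply/eqP | ]; lia.
Qed.

Lemma circ_coloring_recolor_succ N d p f : 2 <= d -> p < N -> circ_coloring N d f ->
  (forall x y, e x y -> f x = p -> f y != (p + d) %% N) ->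
  circ_coloring N d (recolor_succ N p f).
Proof.
move=> d_ge2 lt_pN [lt_f f_adj] no_edge; rewrite /recolor_succ.
split=> [x|x y exy]; first by case: ifP => _; [rewrite ltn_pmod; lia | apply: lt_f].
have adj := f_adj x y exy; have no_xy := no_edge x y exy.
have no_yx : f y = p -> f x != (p + d) %% N by apply: no_edge; rewrite e_sym.
case: (eqVneq (f x) p) => [fx|_]; case: (eqVneq (f y) p) => [fy|_] //.
- by move: adj; rewrite fx fy /circ_adj /cdist; lia.
- by apply: circ_adj_succ => //; [rewrite -fx | apply: no_xy].
- by rewrite circ_adjC; apply: circ_adj_succ => //; [rewrite -fy circ_adjC | apply: no_yx].
Qed.

End CircularColorings.

Section MinimalCircularColoring.
Variables (V : finType) (e : rel V).
Hypothesis e_sym : symmetric e.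
Variables (k N d : nat) (f : V -> nat).
Hypothesis k_min : forall m, colorable e m -> k <= m.
Hypotheses (f_col : circ_coloring e N d f) (d_gt0 : 0 < d) (le_dN : d <= N).
Hypothesis lt_N_kd : N < k * d.
Hypothesis N_min : forall n' d', 0 < d' <= n' -> n' < k * d' ->
  (exists g, circ_coloring e n' d' g) -> N <= n'.

Lemma min_circ_d_ge2 : 2 <= d.
Proof.
rewrite ltnNge; apply/negP => d_le1.
have d1 : d = 1 by lia.
move: f_col lt_N_kd; rewrite d1 muln1 => /colorable_circ_coloring /k_min; lia.
Qed.

Lemma min_circ_edge : exists x y, e x y.
Proof.
case: (pickP (fun xy : V * V => e xy.1 xy.2)) => [[x y] exy|no_edge].
  by exists x, y.
have col1 : colorable e 1.
  by apply/existsP; exists [ffun=> ord0]; apply/'forall_forallP => x y; rewrite (no_edge (x, y)).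
by have := k_min col1; nia.
Qed.

Lemma min_circ_2d_le : d + d <= N.
Proof.
have [x [y exy]] := min_circ_edge; case: f_col => lt_f /(_ x y exy).
by have := lt_f x; have := lt_f y; rewrite /circ_adj /cdist; lia.
Qed.

Lemma min_circ_coprime : coprime N d.
Proof.
apply: contraT => not_co; set g := gcdn N d.
have g_gt0 : 0 < g by rewrite gcdn_gt0 d_gt0 orbT.
have g_gt1 : 1 < g by move: not_co; rewrite /coprime -/g; lia.
have [n' def_N] := dvdnP (dvdn_gcdl N d); have [d' def_d] := dvdnP (dvdn_gcdr N d).
rewrite -/g in def_N def_d.
have : N <= n'.
  apply: (N_min (d' := d')).
  - by move: d_gt0 le_dN; rewrite def_N def_d; nia.
  - by move: lt_N_kd; rewrite def_N def_d mulnA ltn_pmul2r //; lia.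
  - by exists (fun x => f x %/ g); apply: circ_coloring_divn; rewrite -?def_N -?def_d //; lia.
by move: le_dN; rewrite def_N def_d; nia.
Qed.

Lemma min_circ_surj g : circ_coloring e N d g -> forall q, q < N -> exists x, g x = q.
Proof.
move=> g_col q lt_qN; case: (pickP (fun x => g x == q)) => [x /eqP|g_avoid]; first by exists x.
have d_ge2 := min_circ_d_ge2; have le_2dN := min_circ_2d_le.
have [N' [d' [farey d'_gt0 lt_N'N]]] := farey_pred (leq_trans d_gt0 le_dN) d_ge2 min_circ_coprime.
have lt_j0N : N - N %% d < N by have := farey_modn_gt0 d_ge2 d'_gt0 farey; lia.
(* rotate the unused colour onto [j0], where the Farey compression breaks down *)
have [h h_col h_avoid] :=
  circ_coloring_move_missing lt_qN lt_j0N g_col (fun x => negbT (g_avoid x)).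
have : N <= N'; last lia.
apply: (N_min (d' := d')); [nia | nia |].
by exists (fun x => h x * d' %/ d); apply: circ_coloring_farey h_avoid.
Qed.

Lemma min_circ_tight p : p < N -> exists x y, [/\ e x y, f x = p & f y = (p + d) %% N].
Proof.
move=> lt_pN.
case: (pickP (fun xy : V * V => [&& e xy.1 xy.2, f xy.1 == p & f xy.2 == (p + d) %% N])).
  by move=> [x y] /and3P[exy /eqP fx /eqP fy]; exists x, y.
move=> no_edge; have d_ge2 := min_circ_d_ge2; have le_2dN := min_circ_2d_le.
have [|x /eqP] := min_circ_surj (circ_coloring_recolor_succ e_sym d_ge2 lt_pN f_col _) lt_pN.
  by move=> x y exy fx; have := no_edge (x, y); rewrite /= exy fx eqxx /= => /negbT.
by rewrite (negbTE (recolor_succ_neq f x _ lt_pN)) //; lia.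
Qed.

End MinimalCircularColoring.

Section SupportedSets.
Variables (V : finType) (e : rel V).
Hypotheses (e_sym : symmetric e) (e_irr : irreflexive e).

Lemma independentU1 F u : independent e F -> (forall w, w \in F -> ~~ e u w) ->
  independent e (u |: F).
Proof.
move=> /forall_inP F_ind u_nadj; apply/forall_inP => x; rewrite in_setU1 => Fx.
apply/forall_inP => y; rewrite in_setU1 => Fy.
case/orP: Fx => [/eqP ->|Fx]; case/orP: Fy => [/eqP ->|Fy].
- by rewrite e_irr.
- exact: u_nadj.
- by rewrite e_sym; apply: u_nadj.
- exact: (forall_inP (F_ind x Fx)).
Qed.

Lemma supports_free F uv : independent e F -> supports e uv F -> Defs.free e F.
Proof.
case: uv => u v /= F_ind /andP[/= euv /eqP F_nbhd].
have nadj w z : w \in F -> z \in [set u; v] -> ~~ e z w.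
  move=> Fw /set2P z_uv; apply/negP => ezw.
  have : w \in F :&: (nbhd e u :|: nbhd e v) by case: z_uv ezw => -> ezw; rewrite !inE Fw ezw ?orbT.
  by rewrite F_nbhd inE.
have [Mu Mu_max sub_Mu] :=
  maxset_exists (independentU1 F_ind (fun w Fw => nadj w u Fw (set21 u v))).
have [Mv Mv_max sub_Mv] :=
  maxset_exists (independentU1 F_ind (fun w Fw => nadj w v Fw (set22 u v))).
rewrite /Defs.free F_ind; apply/existsP; exists Mu; apply/existsP; exists Mv.
rewrite /max_independent Mu_max Mv_max (subset_trans (subsetUr _ _) sub_Mu).
rewrite (subset_trans (subsetUr _ _) sub_Mv) !andbT; apply: contraTneq euv => Mu_Mv.
have /maxsetP[/forall_inP Mu_ind _] := Mu_max.
apply: (forall_inP (Mu_ind u (subsetP sub_Mu u (setU11 u F)))).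
by rewrite Mu_Mv (subsetP sub_Mv v (setU11 v F)).
Qed.

End SupportedSets.

Definition nblocks N d := N.-1 %/ d.-1 + 1.

Lemma nblocks_lt N d k : 2 <= d -> N < k * d -> nblocks N d < 2 * k.
Proof.
move=> d_ge2 lt_N_kd; rewrite /nblocks.
have : N.-1 < (2 * k).-1 * d.-1 by nia.
by rewrite -ltn_divLR //; lia.
Qed.

Section ColorBlocks.
Variables (V : finType) (e : rel V).
Hypotheses (e_sym : symmetric e) (e_irr : irreflexive e).
Variables (N d : nat) (f : V -> nat) (x0 : V).
Hypotheses (f_col : circ_coloring e N d f) (d_ge2 : 2 <= d) (le_2dN : d + d <= N).
Hypothesis f_tight : forall p, p < N -> exists x y, [/\ e x y, f x = p & f y = (p + d) %% N].

Let dm1_gt0 : 0 < d.-1. Proof. lia. Qed.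

Local Notation nblocks := (nblocks N d).

(* Block j is the set of colours [j(d-1), (j+1)(d-1)); the colours [block_pred j]
   and [block_pred j + d] sit just before and just after it on the cycle, so an
   edge coloured with them supports the block. *)
Definition block_pred (j : nat) := if j == 0 then N.-1 else j * d.-1 - 1.

Lemma block_start_le j : j < nblocks -> j * d.-1 <= N.-1.
Proof. by rewrite /nblocks addn1 ltnS leq_divRL. Qed.

Lemma block_pred_lt j : j < nblocks -> block_pred j < N.
Proof. by move/block_start_le; rewrite /block_pred; case: ifP; lia. Qed.

Lemma block_pred_inj i j : i < nblocks -> j < nblocks -> block_pred i = block_pred j -> i = j.
Proof.
move=> /block_start_le le_i /block_start_le le_j; rewrite /block_pred.
have dm1_le j' : j' != 0 -> d.-1 <= j' * d.-1 by move=> ?; rewrite leq_pmull; lia.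
case: (eqVneq i 0) => [->|/dm1_le ?]; case: (eqVneq j 0) => [->|/dm1_le ?] //; try lia.
by move=> ?; apply/eqP; rewrite -(eqn_pmul2r dm1_gt0); apply/eqP; lia.
Qed.

Lemma block_not_adj j w : j < nblocks -> f w %/ d.-1 = j ->
  ~~ circ_adj N d (block_pred j) (f w) && ~~ circ_adj N d ((block_pred j + d) %% N) (f w).
Proof.
move=> /block_start_le le_jN fw_j; case: f_col => lt_f _; have := lt_f w.
have def_fw := divn_eq (f w) d.-1; have lt_r := ltn_pmod (f w) dm1_gt0.
rewrite fw_j in def_fw; rewrite def_fw; move: (f w %% d.-1) lt_r => r lt_r lt_fw.
rewrite /block_pred /circ_adj /cdist; case: (eqVneq j 0) => [j0|j_neq0].
  rewrite j0 mul0n in lt_fw *; rewrite (modn_lt_dbl (x := N.-1 + d)); last lia.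
  by case: ifP => ?; apply/andP; split; apply/negP => /andP[]; lia.
have : d.-1 <= j * d.-1 by rewrite leq_pmull; lia.
move: le_jN lt_fw; move: (j * d.-1) => m ? ? ?.
rewrite (modn_lt_dbl (x := m - 1 + d)); last lia.
by case: ifP => ?; apply/andP; split; apply/negP => /andP[]; lia.
Qed.

Definition block_edge (j : nat) : V * V := odflt (x0, x0)
  [pick uv : V * V | [&& e uv.1 uv.2, f uv.1 == block_pred j & f uv.2 == (block_pred j + d) %% N]].

Lemma block_edgeP j : j < nblocks ->
  [/\ e (block_edge j).1 (block_edge j).2, f (block_edge j).1 = block_pred j
    & f (block_edge j).2 = (block_pred j + d) %% N].
Proof.
move=> lt_j; rewrite /block_edge; case: pickP => [uv /and3P[? /eqP ? /eqP ?] //|no_uv].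
have [x [y [exy fx fy]]] := f_tight (block_pred_lt lt_j).
by move: (no_uv (x, y)); rewrite /= exy fx fy !eqxx.
Qed.

Definition blocks := [ffun j : 'I_nblocks => [set v | f v %/ d.-1 == j]].
Definition block_edges := [ffun j : 'I_nblocks => block_edge j].

Lemma blocks_independent j : independent e (blocks j).
Proof.
case: f_col => _ f_adj; rewrite ffunE; apply/forall_inP => u; rewrite inE => /eqP fu_j.
apply/forall_inP => v; rewrite inE => /eqP fv_j; apply: contraTN isT => /f_adj.
have := divn_eq (f u) d.-1; have := divn_eq (f v) d.-1.
have := ltn_pmod (f u) dm1_gt0; have := ltn_pmod (f v) dm1_gt0.
rewrite fu_j fv_j; move: (f u %% d.-1) (f v %% d.-1) (j * d.-1) => ru rv m.
by rewrite /circ_adj /cdist => ? ? -> -> /andP[]; lia.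
Qed.

Lemma blocks_cover x : exists j, x \in blocks j.
Proof.
have lt_j : f x %/ d.-1 < nblocks.
  by rewrite /nblocks addn1 ltnS leq_div2r //; case: f_col => lt_f _; have := lt_f x; lia.
by exists (Ordinal lt_j); rewrite ffunE inE.
Qed.

Lemma blocks_disjoint i j : i != j -> [disjoint blocks i & blocks j].
Proof.
apply: contraNT; rewrite -setI_eq0 => /set0Pn[v]; rewrite !ffunE !inE => /andP[/eqP vi /eqP vj].
by rewrite -(inj_eq val_inj) /= -vi -vj.
Qed.

Lemma blocks_supported j : supports e (block_edges j) (blocks j).
Proof.
case: f_col => _ f_adj; have [euv fu fv] := block_edgeP (ltn_ord j).
rewrite /supports ffunE euv; apply/eqP/setP => w; rewrite !ffunE !inE.
apply/negP => /andP[/eqP fw_j adj_w].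
have /andP[] := block_not_adj (ltn_ord j) fw_j; rewrite -fv -fu.
by case/orP: adj_w => /f_adj ->.
Qed.

Lemma block_edges_load x :
  #|[set j : 'I_nblocks | (x == (block_edges j).1) || (x == (block_edges j).2)]| <= 2.
Proof.
have card_le1 (g : 'I_nblocks -> nat) : injective g -> #|[set j | f x == g j]| <= 1.
  move=> g_inj; rewrite leqNgt; apply/negP => /card_gt1P[i [j [+ + ne_ij]]].
  by rewrite !inE => /eqP fx_i /eqP fx_j; move: ne_ij; rewrite (g_inj i j) ?eqxx // -fx_i.
have pred_inj : injective (fun j : 'I_nblocks => block_pred j).
  by move=> i j /(block_pred_inj (ltn_ord i) (ltn_ord j)) /val_inj.
have succ_inj : injective (fun j : 'I_nblocks => (block_pred j + d) %% N).
  move=> i j /eqP; rewrite eqn_modDr !modn_small ?block_pred_lt //.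
  by move=> /eqP /pred_inj.
apply: (@leq_trans #|[set j : 'I_nblocks | f x == block_pred j]
  :|: [set j : 'I_nblocks | f x == (block_pred j + d) %% N]|).
  apply: subset_leq_card; apply/subsetP => j; rewrite !inE ffunE.
  by have [_ fu fv] := block_edgeP (ltn_ord j); case/orP => /eqP ->; rewrite ?fu ?fv eqxx ?orbT.
apply: leq_trans (leq_card_setU _ _) _.
by rewrite -[2]/(1 + 1) leq_add ?card_le1.
Qed.

Lemma phi_feasible_blocks a b : 2 <= b -> phi_feasible e a b nblocks.
Proof.
move=> b_ge2; apply/existsP; exists blocks; apply/existsP; exists block_edges.
apply/and5P; split.
- exact/forallP/blocks_independent.
- by apply/forallP => x; apply/existsP; apply: blocks_cover.
- by apply/'forall_forallP => i j; apply/implyP/blocks_disjoint.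
- apply/forallP => j; apply/implyP => _; rewrite blocks_supported andbT.
  exact: (supports_free e_sym e_irr (blocks_independent j) (blocks_supported j)).
- apply/forallP => x; apply: (leq_trans _ b_ge2); apply: (leq_trans _ (block_edges_load x)).
  by apply: subset_leq_card; apply/subsetP => j; rewrite !inE => /andP[].
Qed.

End ColorBlocks.

Section Reduction.
Variables (V : finType) (e : rel V).
Hypotheses (e_sym : symmetric e) (e_irr : irreflexive e).

Lemma ext_geq_phi_le a b m t : ext_geq (phi e a b) m -> phi_feasible e a b t -> m <= t.
Proof.
rewrite /phi; case: excluded_middle_informative => [ex_t|no_t] /=.
  by case: (ex_minnP ex_t) => t0 _ t0_min le_m /t0_min; apply: leq_trans.
by move=> _ t_feas; case: no_t; exists t.
Qed.

Lemma minimal_circ_hom k n d : 0 < d <= n -> n < k * d -> circ_hom e n d ->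
  exists N d' f, [/\ 0 < d' <= N, N < k * d', circ_coloring e N d' f &
    forall n' d'', 0 < d'' <= n' -> n' < k * d'' ->
      (exists g, circ_coloring e n' d'' g) -> N <= n'].
Proof.
move=> /andP[d_gt0 le_dn] lt_n_kd hom.
pose P m := [exists d' : 'I_m.+1, (0 < d') && (m < k * d') && circ_hom e m d'].
have ex_P : exists m, P m.
  by exists n; apply/existsP; exists (Ordinal (le_dn : d < n.+1)); rewrite /= d_gt0 ?lt_n_kd ?hom.
case: (ex_minnP ex_P) => N /existsP[d' /andP[/andP[d'_gt0 lt_N_kd'] /circ_homP[f f_col]]] N_min.
exists N, d', f; split => //; first by rewrite d'_gt0 -ltnS ltn_ord.
move=> n' d'' /andP[d''_gt0 le_d''n'] lt_n' /circ_homP hom'; apply: N_min.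
by apply/existsP; exists (Ordinal (le_d''n' : d'' < n'.+1)); rewrite /= d''_gt0 ?lt_n' ?hom'.
Qed.

Lemma phi_feasible_lt_2chi a b n d : 0 < #|V| -> 2 <= b ->
  0 < d <= n -> n < chi e * d -> circ_hom e n d ->
  exists2 t, t < 2 * chi e & phi_feasible e a b t.
Proof.
move=> /card_gt0P[x0 _] b_ge2 dn lt_n_kd hom; have [_ chi_min] := chiP e_irr.
have [N [d' [f [/andP[d'_gt0 le_d'N] lt_N_kd' f_col N_min]]]] := minimal_circ_hom dn lt_n_kd hom.
have d'_ge2 := min_circ_d_ge2 chi_min f_col d'_gt0 le_d'N lt_N_kd'.
have le_2d'N := min_circ_2d_le chi_min f_col d'_gt0 le_d'N lt_N_kd'.
have f_tight := min_circ_tight e_sym chi_min f_col d'_gt0 le_d'N lt_N_kd' N_min.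
exists (nblocks N d'); first exact: nblocks_lt lt_N_kd'.
exact: (phi_feasible_blocks e_sym e_irr x0 f_col d'_ge2 le_2d'N f_tight a b_ge2).
Qed.

End Reduction.

Theorem mainTheorem7 (V : finType) (e : rel V)
  (e_sym : symmetric e) (e_irr : irreflexive e) (V_nonempty : (0 < #|V|)%N)
  (a b : nat) (hb : (2 <= b)%N)
  (Hphi : ext_geq (phi e a b) (2 * chi e)) :
  is_circ_chrom e ((chi e)%:R : rat).
Proof.
have [chi_col _] := chiP e_irr.
have chi_gt0 : 0 < chi e.
  case/card_gt0P: V_nonempty => x _; case/existsP: chi_col => g _.
  by case: (g x) => i; case: (chi e).
split=> [|n d dn hom].
  exists (chi e), 1; split; rewrite ?divr1 ?chi_gt0 //.
  by have [f f_col] := circ_coloring_colorable chi_col; apply/circ_homP; exists f.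
have d_gt0 : 0 < d by case/andP: dn.
rewrite ler_pdivlMr ?ltr0n // -natrM ler_nat leqNgt; apply/negP => lt_n_chid.
have [t lt_t t_feas] := phi_feasible_lt_2chi e_sym e_irr a V_nonempty hb dn lt_n_chid hom.
by have := ext_geq_phi_le Hphi t_feas; rewrite leqNgt lt_t.
Qed.
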